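(* For any based space $(X,x_0)$, the topology of $\pi_1^{\tau}(X,x_0)$ is the finest group topology on $\pi_1(X,x_0)$ for which the map $\pi:\Omega(X,x_0)\to\pi_1(X,x_0)$, $\alpha\mapsto[\alpha]$, is continuous. Equivalently, if $\Phi:\pi_1(X,x_0)\to G$ is a homomorphism to a topological group $G$ such that $\Phi\circ\pi:\Omega(X,x_0)\to G$ is continuous, then $\Phi:\pi_1^{\tau}(X,x_0)\to G$ is continuous.
   Context: $\Omega(X,x_0)$ is the space of loops at $x_0$ with the compact-open topology. $\pi_1^{qtop}(X,x_0)$ is $\pi_1(X,x_0)$ with the quotient topology with respect to $\pi$. $F_M(S)$ is the free (Markov) topological group on a space $S$. For a group with (arbitrary) topology $G$, $\tau(G)$ is $G$ with the quotient topology with respect to the multiplication epimorphism $m_G:F_M(G)\to G$ sending each generator $g$ to $g$. $\pi_1^{\tau}(X,x_0)=\tau(\pi_1^{qtop}(X,x_0))$. *)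

From Stdlib Require Import Reals Lra List Classical ClassicalEpsilon
  FunctionalExtensionality PropExtensionality.
From Stdlib Require Import Relations.Relation_Operators.
Open Scope R_scope.


Definition is_topology {A : Type} (T : (A -> Prop) -> Prop) : Prop :=
  T (fun _ => True) /\
  (forall U V, T U -> T V -> T (fun x => U x /\ V x)) /\
  (forall F : (A -> Prop) -> Prop, (forall U, F U -> T U) ->
     T (fun x => exists U, F U /\ U x)).

Definition continuous {A B : Type} (TA : (A -> Prop) -> Prop)
  (TB : (B -> Prop) -> Prop) (f : A -> B) : Prop :=
  forall V, TB V -> TA (fun x => V (f x)).

Definition generated {A : Type} (S : (A -> Prop) -> Prop) : (A -> Prop) -> Prop :=
  fun U => forall T, is_topology T -> (forall V, S V -> T V) -> T U.

Definition prodtop {A B : Type} (TA : (A -> Prop) -> Prop) (TB : (B -> Prop) -> Prop)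
  : (A * B -> Prop) -> Prop :=
  generated (fun W => exists U V, TA U /\ TB V /\
                       forall p, W p <-> (U (fst p) /\ V (snd p))).

Definition compact {A : Type} (T : (A -> Prop) -> Prop) (K : A -> Prop) : Prop :=
  forall F : (A -> Prop) -> Prop, (forall U, F U -> T U) ->
    (forall x, K x -> exists U, F U /\ U x) ->
    exists l : list (A -> Prop), (forall U, In U l -> F U) /\
      (forall x, K x -> exists U, In U l /\ U x).

Definition Ropen (W : R -> Prop) : Prop :=
  forall x, W x -> exists eps, 0 < eps /\ forall y, Rabs (y - x) < eps -> W y.

Definition I := {t : R | 0 <= t <= 1}.

Definition TI : (I -> Prop) -> Prop :=
  fun V => exists W, Ropen W /\ forall t : I, V t <-> W (proj1_sig t).

Lemma clamp_ok (r : R) : 0 <= Rmax 0 (Rmin 1 r) <= 1.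
Proof.
  unfold Rmax, Rmin.
  destruct (Rle_dec 1 r); destruct (Rle_dec 0 _); lra.
Qed.

Definition clampI (r : R) : I := exist _ (Rmax 0 (Rmin 1 r)) (clamp_ok r).

Definition I0 : I := clampI 0.
Definition I1 : I := clampI 1.

Section Loops.
Context {X : Type} (TX : (X -> Prop) -> Prop) (x0 : X).

Definition is_loop (a : I -> X) : Prop :=
  continuous TI TX a /\ a I0 = x0 /\ a I1 = x0.

Definition Omega : Type := {a : I -> X | is_loop a}.

Definition CO : (Omega -> Prop) -> Prop :=
  generated (fun W => exists K U, compact TI K /\ TX U /\
     forall a : Omega, W a <-> (forall t, K t -> U (proj1_sig a t))).

Definition homotopic (a b : I -> X) : Prop :=
  exists H : I * I -> X, continuous (prodtop TI TI) TX H /\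
    (forall s, H (s, I0) = a s /\ H (s, I1) = b s) /\
    (forall t, H (I0, t) = x0 /\ H (I1, t) = x0).

Definition concat (a b : I -> X) : I -> X :=
  fun s => if Rle_dec (proj1_sig s) (1/2) then a (clampI (2 * proj1_sig s))
           else b (clampI (2 * proj1_sig s - 1)).

Definition reverse (a : I -> X) : I -> X := fun s => a (clampI (1 - proj1_sig s)).

Lemma const_loop_ok (HX : TX (fun _ => True)) : is_loop (fun _ => x0).
Proof.
  split; [| split; reflexivity].
  intros V _. exists (fun _ => V x0). split.
  - intros x Hx. exists 1. split; [lra | intros; exact Hx].
  - intro t; tauto.
Qed.
End Loops.

Definition quot {A : Type} (Rel : A -> A -> Prop) : Type :=
  {P : A -> Prop | exists a, P = Rel a}.

Definition cls {A : Type} (Rel : A -> A -> Prop) (a : A) : quot Rel :=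
  exist _ (Rel a) (ex_intro _ a eq_refl).

Definition rep {A : Type} {Rel : A -> A -> Prop} (c : quot Rel) : A :=
  proj1_sig (constructive_indefinite_description _ (proj2_sig c)).

Section Pi1.
Context {X : Type} (TX : (X -> Prop) -> Prop) (x0 : X).

Definition htp (a b : Omega TX x0) : Prop :=
  homotopic TX x0 (proj1_sig a) (proj1_sig b).

Definition pi1 : Type := quot htp.

Definition pi_map (a : Omega TX x0) : pi1 := cls htp a.

Definition pi1_mul (c d : pi1) : pi1 :=
  epsilon (inhabits c) (fun e =>
    homotopic TX x0 (concat (proj1_sig (rep c)) (proj1_sig (rep d)))
                    (proj1_sig (rep e))).

Definition pi1_inv (c : pi1) : pi1 :=
  epsilon (inhabits c) (fun e =>
    homotopic TX x0 (reverse (proj1_sig (rep c))) (proj1_sig (rep e))).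

Definition pi1_one (HX : is_topology TX) : pi1 :=
  pi_map (exist _ (fun _ => x0) (const_loop_ok TX x0 (proj1 HX))).

Definition qtop : (pi1 -> Prop) -> Prop :=
  fun U => CO TX x0 (fun a => U (pi_map a)).
End Pi1.

Definition is_group {G : Type} (mul : G -> G -> G) (inv : G -> G) (one : G) : Prop :=
  (forall a b c, mul (mul a b) c = mul a (mul b c)) /\
  (forall a, mul one a = a) /\
  (forall a, mul (inv a) a = one).

Definition is_group_topology {G : Type} (mul : G -> G -> G) (inv : G -> G)
  (T : (G -> Prop) -> Prop) : Prop :=
  is_topology T /\
  continuous (prodtop T T) T (fun p => mul (fst p) (snd p)) /\
  continuous T T inv.

Section Free.
Context {S : Type}.

Definition word := list (bool * S).

Inductive red_step : word -> word -> Prop :=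
  | red_cancel : forall w1 w2 b x,
      red_step (w1 ++ (b, x) :: (negb b, x) :: w2) (w1 ++ w2).

Definition word_eq : word -> word -> Prop := clos_refl_sym_trans word red_step.

Definition FreeGroup : Type := quot word_eq.

Definition F_mul (u v : FreeGroup) : FreeGroup := cls word_eq (rep u ++ rep v).
Definition F_inv (u : FreeGroup) : FreeGroup :=
  cls word_eq (rev (map (fun p => (negb (fst p), snd p)) (rep u))).
Definition F_one : FreeGroup := cls word_eq nil.
Definition F_eta (x : S) : FreeGroup := cls word_eq ((true, x) :: nil).

(** F_M(S): the finest group topology on F(S) making S -> F(S) continuous
    (the supremum of all such group topologies). *)
Definition FM_top (TS : (S -> Prop) -> Prop) : (FreeGroup -> Prop) -> Prop :=
  generated (fun U => exists T, is_group_topology F_mul F_inv T /\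
                                continuous TS T F_eta /\ T U).
End Free.

Section Tau.
Context {G : Type} (mul : G -> G -> G) (inv : G -> G) (one : G).

Definition eval_word (w : @word G) : G :=
  fold_right (fun (p : bool * G) (acc : G) => mul (if fst p then snd p else inv (snd p)) acc) one w.

Definition m_G (u : @FreeGroup G) : G := eval_word (rep u).

Definition tau_top (TG : (G -> Prop) -> Prop) : (G -> Prop) -> Prop :=
  fun U => FM_top TG (fun u => U (m_G u)).
End Tau.

Definition pi1_tau_top {X : Type} (TX : (X -> Prop) -> Prop) (HX : is_topology TX)
  (x0 : X) : (pi1 TX x0 -> Prop) -> Prop :=
  tau_top (pi1_mul TX x0) (pi1_inv TX x0) (pi1_one TX x0 HX) (qtop TX x0).

(* The loops at [x0] form a group up to homotopy, all homotopies being explicit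
   reparametrisations.  For any group [G] with a topology, [tau(G)] is the final
   topology of the homomorphism [m_G : F_M(G) -> G], which has the section
   [eta]; a surjective homomorphism of topological groups is open, so [tau(G)]
   is a group topology, and it is coarser than the topology of [G] because
   [m_G o eta = id].  If [Phi : G -> H] is a continuous homomorphism into a
   topological group, the topology pulled back along [Phi o m_G] is a group
   topology on [F(G)] making [eta] continuous, hence coarser than that of
   [F_M(G)]; so [Phi] is continuous on [tau(G)].  For [G = pi_1^qtop(X,x0)],
   continuity of [Phi] means continuity of [Phi o pi]: this is the universal
   property, and [Phi = id] gives maximality among group topologies. *)

From Stdlib Require Import Reals Lra List Classical ClassicalEpsilon
  FunctionalExtensionality PropExtensionality.
From Stdlib Require Import Relations.Relation_Operators.
Open Scope R_scope.

Lemma open_ext {A : Type} (T : (A -> Prop) -> Prop) (U V : A -> Prop) :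
  T U -> (forall x, U x <-> V x) -> T V.
Proof.
  intros hU e. replace V with U; auto.
  apply functional_extensionality; intro x; apply propositional_extensionality; auto.
Qed.

Lemma open_of_local {A : Type} (T : (A -> Prop) -> Prop) (P : A -> Prop) :
  is_topology T ->
  (forall x, P x -> exists Q, T Q /\ Q x /\ forall y, Q y -> P y) -> T P.
Proof.
  intros [_ [_ hUnion]] h.
  apply open_ext with (fun x => exists Q, (T Q /\ forall y, Q y -> P y) /\ Q x).
  - apply hUnion. intros Q [hQ _]; auto.
  - intro x; split.
    + intros [Q [[_ hQ] hx]]; auto.
    + intros hx. destruct (h x hx) as [Q [hQ [hQx hQP]]]. exists Q; auto.
Qed.

Lemma generated_is_topology {A : Type} (S : (A -> Prop) -> Prop) :
  is_topology (generated S).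
Proof.
  split; [|split].
  - intros T hT _; apply (proj1 hT).
  - intros U V hU hV T hT hS. apply (proj1 (proj2 hT)); [apply hU|apply hV]; auto.
  - intros F hF T hT hS. apply (proj2 (proj2 hT)). intros U hU; apply (hF U hU); auto.
Qed.

Lemma generated_sub {A : Type} (S : (A -> Prop) -> Prop) U : S U -> generated S U.
Proof. intros h T hT hS; auto. Qed.

Lemma generated_min {A : Type} (S T : (A -> Prop) -> Prop) :
  is_topology T -> (forall U, S U -> T U) -> forall U, generated S U -> T U.
Proof. intros hT hS U hU; apply hU; auto. Qed.

(* [pi_1^qtop] and [tau] are final topologies. *)
Definition final_top {A B : Type} (TA : (A -> Prop) -> Prop) (f : A -> B) :
  (B -> Prop) -> Prop :=
  fun U => TA (fun a => U (f a)).

Definition initial_top {A B : Type} (TB : (B -> Prop) -> Prop) (h : A -> B) :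
  (A -> Prop) -> Prop :=
  fun W => exists V, TB V /\ forall x, W x <-> V (h x).

Lemma final_top_is_topology {A B : Type} (TA : (A -> Prop) -> Prop) (f : A -> B) :
  is_topology TA -> is_topology (final_top TA f).
Proof.
  intros [hT [hI hU]]; split; [|split]; unfold final_top.
  - exact hT.
  - intros U V; apply hI.
  - intros F hF.
    apply open_ext with
      (fun a => exists W, (exists U, F U /\ W = (fun a => U (f a))) /\ W a).
    + apply hU. intros W [U [hFU ->]]; auto.
    + intro a; split.
      * intros [W [[U [hFU ->]] ha]]; eauto.
      * intros [U [hFU ha]]. exists (fun a => U (f a)); split; eauto.
Qed.

Lemma initial_top_is_topology {A B : Type} (TB : (B -> Prop) -> Prop) (h : A -> B) :
  is_topology TB -> is_topology (initial_top TB h).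
Proof.
  intros [hT [hI hU]]. split; [|split].
  - exists (fun _ => True); split; auto; tauto.
  - intros U V [U' [hU' eU]] [V' [hV' eV]]. exists (fun b => U' b /\ V' b); split; auto.
    intro x; rewrite eU, eV; tauto.
  - intros F hF.
    exists (fun b => exists V, (exists W, F W /\ TB V /\ forall x, W x <-> V (h x)) /\ V b).
    split.
    + apply hU. intros V [W [_ [hV _]]]; auto.
    + intros x; split.
      * intros [W [hW hx]]. destruct (hF W hW) as [V [hV eV]].
        exists V; split; [exists W|apply eV]; auto.
      * intros [V [[W [hW [hV eV]]] hx]]. exists W; split; auto. apply eV; auto.
Qed.

Lemma continuous_initial_top {A B : Type} (TB : (B -> Prop) -> Prop) (h : A -> B) :
  continuous (initial_top TB h) TB h.
Proof. intros V hV. exists V; split; auto; tauto. Qed.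

Lemma continuous_to_generated {A B : Type} (TA : (A -> Prop) -> Prop)
  (S : (B -> Prop) -> Prop) (f : A -> B) :
  is_topology TA -> (forall V, S V -> TA (fun x => V (f x))) ->
  continuous TA (generated S) f.
Proof.
  intros hA hS V hV.
  apply (generated_min S (final_top TA f)); auto. apply final_top_is_topology; auto.
Qed.

Lemma continuous_comp {A B C : Type} TA TB TC (f : A -> B) (g : B -> C) :
  continuous TA TB f -> continuous TB TC g -> continuous TA TC (fun x => g (f x)).
Proof. intros hf hg V hV. apply (hf (fun y => V (g y))), hg, hV. Qed.

Lemma continuous_const {A B : Type} (TA : (A -> Prop) -> Prop)
  (TB : (B -> Prop) -> Prop) (c : B) :
  is_topology TA -> continuous TA TB (fun _ => c).
Proof.
  intros [hT [_ hU]] V _. destruct (classic (V c)).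
  - apply open_ext with (fun _ => True); auto. intros; tauto.
  - apply open_ext with (fun x => exists U, (fun _ : A -> Prop => False) U /\ U x).
    + apply hU. intros _ [].
    + intros x; split; [intros [U [[] _]]|tauto].
Qed.

Lemma continuous_id {A : Type} (TA : (A -> Prop) -> Prop) : continuous TA TA (fun x => x).
Proof. intros V hV; exact hV. Qed.

Lemma prodtop_is_topology {A B : Type} TA TB : is_topology (@prodtop A B TA TB).
Proof. apply generated_is_topology. Qed.

Lemma prodtop_rect_open {A B : Type} (TA : (A -> Prop) -> Prop)
  (TB : (B -> Prop) -> Prop) U V :
  TA U -> TB V -> prodtop TA TB (fun p => U (fst p) /\ V (snd p)).
Proof. intros; apply generated_sub; exists U, V; split; auto; split; auto; tauto. Qed.

Lemma prodtop_mono {A B : Type} (TA TA' : (A -> Prop) -> Prop)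
  (TB TB' : (B -> Prop) -> Prop) :
  (forall U, TA U -> TA' U) -> (forall U, TB U -> TB' U) ->
  forall W, prodtop TA TB W -> prodtop TA' TB' W.
Proof.
  intros hA hB W hW T hT hS. apply hW; auto.
  intros V [U [U' [hU [hU' e]]]]. apply hS. exists U, U'; auto.
Qed.

Lemma continuous_pair {A B C : Type} TA TB TC (f : A -> B) (g : A -> C) :
  is_topology TA -> continuous TA TB f -> continuous TA TC g ->
  continuous TA (prodtop TB TC) (fun x => (f x, g x)).
Proof.
  intros hA hf hg. apply continuous_to_generated; auto.
  intros W [U [V [hU [hV hW]]]].
  apply open_ext with (fun x => U (f x) /\ V (g x)).
  - apply (proj1 (proj2 hA)); auto.
  - intro x; rewrite hW; simpl; tauto.
Qed.

Lemma continuous_fst {A B : Type} (TA : (A -> Prop) -> Prop) (TB : (B -> Prop) -> Prop) :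
  is_topology TB -> continuous (prodtop TA TB) TA fst.
Proof.
  intros hB U hU. apply generated_sub. exists U, (fun _ => True).
  split; auto; split; [apply (proj1 hB)|]. intros; tauto.
Qed.

Lemma continuous_snd {A B : Type} (TA : (A -> Prop) -> Prop) (TB : (B -> Prop) -> Prop) :
  is_topology TA -> continuous (prodtop TA TB) TB snd.
Proof.
  intros hA U hU. apply generated_sub. exists (fun _ => True), U.
  split; [apply (proj1 hA)|]; split; auto. intros; tauto.
Qed.

(* Open sets of [prodtop] are exactly the unions of open rectangles, because
   such unions already form a topology. *)
Lemma prodtop_rect {A B : Type} (TA : (A -> Prop) -> Prop) (TB : (B -> Prop) -> Prop) P :
  is_topology TA -> is_topology TB -> prodtop TA TB P ->
  forall x y, P (x, y) -> exists U V, TA U /\ TB V /\ U x /\ V y /\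
     forall x' y', U x' -> V y' -> P (x', y').
Proof.
  intros [hA [hAI _]] [hB [hBI _]] hP.
  set (Q := fun (W : A * B -> Prop) => forall x y, W (x, y) -> exists U V,
     TA U /\ TB V /\ U x /\ V y /\ forall x' y', U x' -> V y' -> W (x', y')).
  assert (HQ : is_topology Q).
  { split; [|split].
    - intros x y _. exists (fun _ => True), (fun _ => True); repeat split; auto.
    - intros W1 W2 h1 h2 x y [w1 w2].
      destruct (h1 x y w1) as [U1 [V1 [a1 [b1 [c1 [d1 e1]]]]]].
      destruct (h2 x y w2) as [U2 [V2 [a2 [b2 [c2 [d2 e2]]]]]].
      exists (fun x => U1 x /\ U2 x), (fun y => V1 y /\ V2 y).
      split; [apply hAI; auto|]; split; [apply hBI; auto|].
      split; [auto|]; split; [auto|].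
      intros x1 y1 [] []; auto.
    - intros F hF x y [W [hW hx]].
      destruct (hF W hW x y hx) as [U [V [a [b [c [d e]]]]]].
      exists U, V; do 4 (split; auto). intros; exists W; auto. }
  refine (generated_min _ Q HQ _ P hP).
  intros W [U [V [hU [hV hW]]]] x y hxy. rewrite hW in hxy; simpl in hxy.
  exists U, V; repeat split; try tauto.
  intros; rewrite hW; simpl; auto.
Qed.

Section GroupLaws.
Variables (G : Type) (mul : G -> G -> G) (inv : G -> G) (one : G).
Hypothesis hG : is_group mul inv one.

Lemma mul_assoc a b c : mul (mul a b) c = mul a (mul b c).
Proof. apply (proj1 hG). Qed.

Lemma mul_one_l a : mul one a = a.
Proof. apply (proj1 (proj2 hG)). Qed.

Lemma mul_inv_l a : mul (inv a) a = one.
Proof. apply (proj2 (proj2 hG)). Qed.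

Lemma mul_inv_r a : mul a (inv a) = one.
Proof.
  rewrite <- (mul_one_l (mul a (inv a))), <- (mul_inv_l (inv a)) at 1.
  rewrite mul_assoc, <- (mul_assoc (inv a) a), mul_inv_l, mul_one_l.
  apply mul_inv_l.
Qed.

Lemma mul_one_r a : mul a one = a.
Proof. rewrite <- (mul_inv_l a), <- mul_assoc, mul_inv_r, mul_one_l; auto. Qed.

Lemma mul_inv_cancel_l a b : mul a (mul (inv a) b) = b.
Proof. rewrite <- mul_assoc, mul_inv_r, mul_one_l; auto. Qed.

Lemma inv_mul_cancel_l a b : mul (inv a) (mul a b) = b.
Proof. rewrite <- mul_assoc, mul_inv_l, mul_one_l; auto. Qed.

Lemma inv_unique x y : mul x y = one -> x = inv y.
Proof. intros h. rewrite <- (mul_one_r x), <- (mul_inv_r y), <- mul_assoc, h, mul_one_l; auto. Qed.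

End GroupLaws.

Section Homomorphisms.
Variables (G H : Type) (gmul : G -> G -> G) (ginv : G -> G) (gone : G)
  (hmul : H -> H -> H) (hinv : H -> H) (hone : H) (f : G -> H).
Hypotheses (hG : is_group gmul ginv gone) (hH : is_group hmul hinv hone)
  (hf : forall a b, f (gmul a b) = hmul (f a) (f b)).

Lemma hom_one : f gone = hone.
Proof.
  rewrite <- (inv_mul_cancel_l _ _ _ _ hH (f gone) (f gone)), <- hf, (mul_one_l _ _ _ _ hG).
  apply (mul_inv_l _ _ _ _ hH).
Qed.

Lemma hom_inv a : f (ginv a) = hinv (f a).
Proof. apply (inv_unique _ _ _ _ hH). rewrite <- hf, (mul_inv_l _ _ _ _ hG); apply hom_one. Qed.

End Homomorphisms.

(** * Topological groups: initial and final group topologies *)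

Lemma initial_group_topology {A B : Type} (amul : A -> A -> A) ainv
  (bmul : B -> B -> B) binv TB (h : A -> B) :
  is_group_topology bmul binv TB ->
  (forall u v, h (amul u v) = bmul (h u) (h v)) -> (forall u, h (ainv u) = binv (h u)) ->
  is_group_topology amul ainv (initial_top TB h).
Proof.
  intros [hB [hm hi]] em ei. assert (hP := initial_top_is_topology TB h hB).
  split; [auto|split].
  - intros W [V [hV eV]].
    assert (hhh : continuous (prodtop (initial_top TB h) (initial_top TB h)) (prodtop TB TB)
                    (fun p => (h (fst p), h (snd p)))).
    { apply continuous_pair; [apply prodtop_is_topology| |];
        (eapply continuous_comp; [|apply continuous_initial_top]);
        [apply continuous_fst|apply continuous_snd]; auto. }
    eapply open_ext; [apply (hhh _ (hm V hV))|].
    intros p; simpl. rewrite eV, em; tauto.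
  - intros W [V [hV eV]].
    eapply open_ext; [apply (continuous_initial_top TB h _ (hi V hV))|].
    intros p; simpl. rewrite eV, ei; tauto.
Qed.

(* A surjective homomorphism of topological groups (surjectivity witnessed by
   a section [sec]) is open: the saturation of an open set [A] is the union of
   the right translates [A * y^-1 * z] by elements of the kernel. *)
Lemma final_group_topology {F G : Type} (fmul : F -> F -> F) finv fone FT
  (gmul : G -> G -> G) ginv gone (m : F -> G) (sec : G -> F) :
  is_group fmul finv fone -> is_group gmul ginv gone ->
  is_group_topology fmul finv FT ->
  (forall u v, m (fmul u v) = gmul (m u) (m v)) -> (forall x, m (sec x) = x) ->
  is_group_topology gmul ginv (final_top FT m).
Proof.
  intros hF hG [hFT [hm hi]] em es.
  assert (ei : forall u, m (finv u) = ginv (m u)) by (apply (hom_inv _ _ fmul _ fone gmul _ gone); auto).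
  assert (hT := final_top_is_topology FT m hFT).
  assert (rmul : forall j, continuous FT FT (fun z => fmul z j)).
  { intros j.
    apply (continuous_comp FT (prodtop FT FT) FT (fun z => (z, j)) (fun p => fmul (fst p) (snd p)));
      auto.
    apply continuous_pair; auto; [apply continuous_id|apply continuous_const; auto]. }
  assert (img_open : forall A, FT A -> final_top FT m (fun g => exists y, A y /\ m y = g)).
  { intros A hA. unfold final_top. apply open_of_local; auto.
    intros z [y [hy ey]].
    exists (fun z' => A (fmul z' (fmul (finv z) y))). split; [|split].
    - apply (rmul _ A hA).
    - rewrite (mul_inv_cancel_l _ _ _ _ hF); auto.
    - intros z' hz'. exists (fmul z' (fmul (finv z) y)); split; auto.
      rewrite em, em, ei, ey, (mul_inv_l _ _ _ _ hG), (mul_one_r _ _ _ _ hG); auto. }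
  split; [auto|split].
  - intros U hU. apply open_of_local; [apply prodtop_is_topology|].
    intros [c d] hcd. simpl in hcd.
    assert (hW : prodtop FT FT (fun q => U (m (fmul (fst q) (snd q)))))
      by (apply (hm (fun u => U (m u))); auto).
    destruct (prodtop_rect FT FT _ hFT hFT hW (sec c) (sec d)) as [A [B [hA [hB [ha [hb H]]]]]].
    { simpl. rewrite em, !es; auto. }
    exists (fun q => (fun g => exists y, A y /\ m y = g) (fst q) /\
                    (fun g => exists y, B y /\ m y = g) (snd q)).
    split; [|split].
    + exact (prodtop_rect_open _ _ _ _ (img_open A hA) (img_open B hB)).
    + simpl; split; [exists (sec c)|exists (sec d)]; auto.
    + intros [c' d'] [[y1 [h1 <-]] [y2 [h2 <-]]]. simpl.
      specialize (H _ _ h1 h2). simpl in H. rewrite em in H. exact H.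
  - intros U hU. unfold final_top.
    eapply open_ext; [apply (hi _ hU)|]. intros x; simpl. rewrite ei; tauto.
Qed.

Lemma cls_rep {A : Type} (Rel : A -> A -> Prop) (c : quot Rel) : cls Rel (rep c) = c.
Proof.
  unfold rep. destruct (constructive_indefinite_description _ (proj2_sig c)) as [a ha].
  destruct c as [P hP]. simpl in *. subst P. unfold cls. f_equal. apply proof_irrelevance.
Qed.

Section Quotients.
Variables (A : Type) (Rel : A -> A -> Prop).
Hypotheses (Rel_refl : forall x, Rel x x) (Rel_sym : forall x y, Rel x y -> Rel y x)
  (Rel_trans : forall x y z, Rel x y -> Rel y z -> Rel x z).

Lemma rep_cls x : Rel x (rep (cls Rel x)).
Proof.
  unfold rep. destruct (constructive_indefinite_description _ (proj2_sig (cls Rel x))) as [a ha].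
  simpl in *. rewrite ha. apply Rel_refl.
Qed.

Lemma cls_eq a b : Rel a b -> cls Rel a = cls Rel b.
Proof.
  intros h. unfold cls.
  assert (E : Rel a = Rel b).
  { apply functional_extensionality; intro x; apply propositional_extensionality; split; eauto. }
  generalize (ex_intro (fun a0 => Rel a = Rel a0) a eq_refl).
  generalize (ex_intro (fun a0 => Rel b = Rel a0) b eq_refl).
  rewrite E. intros; f_equal; apply proof_irrelevance.
Qed.

Lemma quot_eq (c d : quot Rel) : Rel (rep c) (rep d) -> c = d.
Proof. intros h. rewrite <- (cls_rep _ c), <- (cls_rep _ d). apply cls_eq, h. Qed.

End Quotients.

(** * The free group and the multiplication map [m_G] *)

Section FreeGroup.
Variable S : Type.

Definition letter_inv (p : bool * S) : bool * S := (negb (fst p), snd p).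
Definition word_inv (w : @word S) : @word S := rev (map letter_inv w).

Lemma word_eq_refl (w : @word S) : word_eq w w.
Proof. apply rst_refl. Qed.
Lemma word_eq_sym (w w' : @word S) : word_eq w w' -> word_eq w' w.
Proof. apply rst_sym. Qed.
Lemma word_eq_trans (w1 w2 w3 : @word S) : word_eq w1 w2 -> word_eq w2 w3 -> word_eq w1 w3.
Proof. apply rst_trans. Qed.

Lemma word_eq_app_l (u w w' : @word S) : word_eq w w' -> word_eq (u ++ w) (u ++ w').
Proof.
  induction 1 as [w w' []| | |]; [|apply rst_refl|apply rst_sym|eapply rst_trans]; eauto.
  apply rst_step. rewrite !app_assoc. constructor.
Qed.

Lemma word_eq_app_r (v w w' : @word S) : word_eq w w' -> word_eq (w ++ v) (w' ++ v).
Proof.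
  induction 1 as [w w' []| | |]; [|apply rst_refl|apply rst_sym|eapply rst_trans]; eauto.
  apply rst_step. rewrite <- !app_assoc. constructor.
Qed.

Lemma word_eq_app_inv (w : @word S) : word_eq (w ++ word_inv w) nil.
Proof.
  induction w as [|p w IH]; [apply word_eq_refl|].
  unfold word_inv in *; simpl. rewrite app_assoc.
  apply word_eq_trans with (p :: (nil ++ letter_inv p :: nil)).
  - apply (word_eq_app_l (p :: nil)), (word_eq_app_r (letter_inv p :: nil) _ nil), IH.
  - apply rst_step. destruct p as [b x]. apply (red_cancel nil nil b x).
Qed.

Lemma word_inv_involutive (w : @word S) : word_inv (word_inv w) = w.
Proof.
  unfold word_inv. rewrite map_rev, map_map, rev_involutive.
  rewrite <- map_id. apply map_ext. intros [b x]; unfold letter_inv; simpl.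
  rewrite Bool.negb_involutive; auto.
Qed.

Lemma word_eq_rep_cls (w : @word S) : word_eq w (rep (cls word_eq w)).
Proof. apply rep_cls, word_eq_refl. Qed.

Lemma cls_word_eq (w w' : @word S) : word_eq w w' -> cls word_eq w = cls word_eq w'.
Proof. apply cls_eq; [apply word_eq_sym|apply word_eq_trans]. Qed.

Lemma free_group_is_group : is_group (@F_mul S) F_inv F_one.
Proof.
  split; [|split].
  - intros a b c. unfold F_mul. apply cls_word_eq.
    eapply word_eq_trans;
      [apply word_eq_app_r, word_eq_sym, word_eq_rep_cls|].
    rewrite <- app_assoc. apply word_eq_app_l, word_eq_rep_cls.
  - intros a. rewrite <- (cls_rep _ a) at 2. unfold F_mul, F_one. apply cls_word_eq.
    apply (word_eq_app_r _ _ nil), word_eq_sym, word_eq_rep_cls.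
  - intros a. unfold F_mul, F_inv, F_one. apply cls_word_eq.
    eapply word_eq_trans; [apply word_eq_app_r, word_eq_sym, word_eq_rep_cls|].
    change (map _ (rep a)) with (map letter_inv (rep a)).
    rewrite <- (word_inv_involutive (rep a)) at 2. apply word_eq_app_inv.
Qed.

End FreeGroup.

Section Evaluation.
Variables (G : Type) (mul : G -> G -> G) (inv : G -> G) (one : G).
Hypothesis hG : is_group mul inv one.

Lemma eval_word_app w1 w2 :
  eval_word mul inv one (w1 ++ w2) = mul (eval_word mul inv one w1) (eval_word mul inv one w2).
Proof.
  induction w1 as [|p w1 IH]; simpl.
  - rewrite (mul_one_l _ _ _ _ hG); auto.
  - rewrite IH, (mul_assoc _ _ _ _ hG); auto.
Qed.

Lemma eval_word_red_step w w' : red_step w w' -> eval_word mul inv one w = eval_word mul inv one w'.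
Proof.
  intros [w1 w2 b x].
  induction w1 as [|p w1 IH]; simpl in *; [|rewrite IH; auto].
  destruct b; simpl.
  - apply (mul_inv_cancel_l _ _ _ _ hG).
  - apply (inv_mul_cancel_l _ _ _ _ hG).
Qed.

Lemma eval_word_eq w w' : word_eq w w' -> eval_word mul inv one w = eval_word mul inv one w'.
Proof. induction 1; [apply eval_word_red_step| | |]; congruence. Qed.

Lemma m_G_mul u v : m_G mul inv one (F_mul u v) = mul (m_G mul inv one u) (m_G mul inv one v).
Proof.
  unfold m_G, F_mul. rewrite <- eval_word_app.
  symmetry; apply eval_word_eq, word_eq_rep_cls.
Qed.

Lemma m_G_eta x : m_G mul inv one (F_eta x) = x.
Proof.
  unfold m_G, F_eta. rewrite <- (eval_word_eq _ _ (word_eq_rep_cls _ _)); simpl.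
  apply (mul_one_r _ _ _ _ hG).
Qed.

End Evaluation.

(** * The Markov free topological group and [tau] *)

Lemma FM_group_topology {S : Type} (TS : (S -> Prop) -> Prop) :
  is_group_topology F_mul F_inv (FM_top TS).
Proof.
  assert (hsub : forall T U, is_group_topology F_mul F_inv T -> continuous TS T F_eta ->
                   T U -> FM_top TS U).
  { intros T U hT he hU. apply generated_sub. exists T; auto. }
  split; [apply generated_is_topology|split].
  - apply continuous_to_generated; [apply prodtop_is_topology|].
    intros V [T [hT [he hV]]].
    apply (prodtop_mono T _ T _); try (intros; apply (hsub T); auto).
    apply (proj1 (proj2 hT)); auto.
  - apply continuous_to_generated; [apply generated_is_topology|].
    intros V [T [hT [he hV]]]. apply (hsub T); auto. apply (proj2 (proj2 hT)); auto.
Qed.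

Lemma F_eta_continuous {S : Type} (TS : (S -> Prop) -> Prop) :
  is_topology TS -> continuous TS (FM_top TS) F_eta.
Proof.
  intros hS. apply continuous_to_generated; auto. intros V [T [_ [he hV]]]. apply he; auto.
Qed.

Section Tau.
Variables (G : Type) (mul : G -> G -> G) (inv : G -> G) (one : G) (TG : (G -> Prop) -> Prop).
Hypotheses (hG : is_group mul inv one) (hTG : is_topology TG).

Lemma tau_group_topology : is_group_topology mul inv (tau_top mul inv one TG).
Proof.
  apply (final_group_topology F_mul F_inv F_one (FM_top TG) mul inv one _ F_eta).
  - apply free_group_is_group.
  - exact hG.
  - apply FM_group_topology.
  - apply m_G_mul, hG.
  - apply m_G_eta, hG.
Qed.

Lemma continuous_to_tau : continuous TG (tau_top mul inv one TG) (fun x => x).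
Proof.
  intros U hU. apply (open_ext TG (fun x => U (m_G mul inv one (F_eta x)))).
  - exact (F_eta_continuous TG hTG _ hU).
  - intros x. rewrite (m_G_eta _ _ _ _ hG); tauto.
Qed.

Lemma continuous_from_tau (H : Type) (hmul : H -> H -> H) (hinv : H -> H) (hone : H)
  (TH : (H -> Prop) -> Prop) (f : G -> H) :
  is_group hmul hinv hone -> is_group_topology hmul hinv TH ->
  (forall a b, f (mul a b) = hmul (f a) (f b)) ->
  continuous TG TH f -> continuous (tau_top mul inv one TG) TH f.
Proof.
  intros hH hTH hf hc V hV. apply generated_sub.
  set (fm := fun u => f (m_G mul inv one u)).
  assert (fm_mul : forall u v, fm (F_mul u v) = hmul (fm u) (fm v))
    by (intros; unfold fm; rewrite (m_G_mul _ _ _ _ hG); auto).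
  exists (initial_top TH fm). split; [|split].
  - apply initial_group_topology with hmul hinv; auto.
    apply (hom_inv _ _ F_mul F_inv F_one hmul hinv hone); auto. apply free_group_is_group.
  - intros W [V' [hV' eV]].
    apply (open_ext TG (fun x => V' (f x))); [apply hc, hV'|].
    intros x. rewrite eV. unfold fm. rewrite (m_G_eta _ _ _ _ hG); tauto.
  - exists V; split; auto; tauto.
Qed.

End Tau.

(** * The unit interval *)

Notation tval := (@proj1_sig R (fun t => 0 <= t <= 1)).

Lemma I_eq (u v : I) : tval u = tval v -> u = v.
Proof.
  destruct u as [u hu], v as [v hv]; simpl; intros ->.
  f_equal; apply proof_irrelevance.
Qed.

Lemma clampI_val (r : R) : 0 <= r <= 1 -> tval (clampI r) = r.
Proof. intros; simpl; unfold Rmax, Rmin; repeat destruct Rle_dec; lra. Qed.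

Lemma clampI_tval (t : I) : clampI (tval t) = t.
Proof. apply I_eq, clampI_val, (proj2_sig t). Qed.

Lemma clampI_lipschitz (r r' : R) :
  Rabs (tval (clampI r) - tval (clampI r')) <= Rabs (r - r').
Proof.
  simpl; unfold Rmax, Rmin; repeat destruct Rle_dec;
  unfold Rabs; repeat destruct Rcase_abs; lra.
Qed.

Lemma I0_val : tval I0 = 0.
Proof. apply clampI_val; lra. Qed.

Lemma I1_val : tval I1 = 1.
Proof. apply clampI_val; lra. Qed.

Ltac clampI_eq := unfold I0, I1; apply I_eq; rewrite ?I0_val, ?I1_val, !clampI_val; lra.

Definition Rcont2 (f : R -> R -> R) : Prop :=
  forall s t e, 0 < e -> exists d, 0 < d /\ forall s' t',
    Rabs (s' - s) < d -> Rabs (t' - t) < d -> Rabs (f s' t' - f s t) < e.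

Lemma Rcont2_ext f g : (forall s t, f s t = g s t) -> Rcont2 f -> Rcont2 g.
Proof.
  intros e hf s t eps heps. destruct (hf s t eps heps) as [d [hd H]].
  exists d; split; auto. intros; rewrite <- !e; auto.
Qed.

Lemma Rcont2_const c : Rcont2 (fun _ _ => c).
Proof.
  intros s t e he; exists 1; split; [lra|]; intros.
  replace (c - c) with 0 by ring; rewrite Rabs_R0; lra.
Qed.

Lemma Rcont2_fst : Rcont2 (fun s _ => s).
Proof. intros s t e he; exists e; split; [lra|]; intros; auto. Qed.

Lemma Rcont2_snd : Rcont2 (fun _ t => t).
Proof. intros s t e he; exists e; split; [lra|]; intros; auto. Qed.

Lemma Rcont2_plus f g : Rcont2 f -> Rcont2 g -> Rcont2 (fun s t => f s t + g s t).
Proof.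
  intros hf hg s t e he.
  destruct (hf s t (e/2)) as [d1 [hd1 H1]]; [lra|].
  destruct (hg s t (e/2)) as [d2 [hd2 H2]]; [lra|].
  exists (Rmin d1 d2); split; [apply Rmin_pos; auto|]; intros s' t' hs ht.
  pose proof (Rmin_l d1 d2); pose proof (Rmin_r d1 d2).
  replace (f s' t' + g s' t' - (f s t + g s t)) with
    ((f s' t' - f s t) + (g s' t' - g s t)) by ring.
  eapply Rle_lt_trans; [apply Rabs_triang|].
  assert (Rabs (f s' t' - f s t) < e/2) by (apply H1; lra).
  assert (Rabs (g s' t' - g s t) < e/2) by (apply H2; lra).
  lra.
Qed.

Lemma Rcont2_opp f : Rcont2 f -> Rcont2 (fun s t => - f s t).
Proof.
  intros hf s t e he. destruct (hf s t e he) as [d [hd H]].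
  exists d; split; auto; intros.
  replace (- f s' t' - - f s t) with (- (f s' t' - f s t)) by ring.
  rewrite Rabs_Ropp; auto.
Qed.

Lemma Rcont2_minus f g : Rcont2 f -> Rcont2 g -> Rcont2 (fun s t => f s t - g s t).
Proof. intros; apply Rcont2_plus, Rcont2_opp; auto. Qed.

Lemma Rabs_mult_sub_le (x x0 y y0 d : R) : 0 < d -> d <= 1 ->
  Rabs (x - x0) < d -> Rabs (y - y0) < d ->
  Rabs (x * y - x0 * y0) <= (Rabs x0 + Rabs y0 + 1) * d.
Proof.
  intros hd hd1 hx hy.
  replace (x * y - x0 * y0) with (x * (y - y0) + y0 * (x - x0)) by ring.
  eapply Rle_trans; [apply Rabs_triang|]. rewrite !Rabs_mult.
  assert (Rabs x <= Rabs x0 + 1).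
  { replace x with (x0 + (x - x0)) by ring.
    eapply Rle_trans; [apply Rabs_triang|]. lra. }
  pose proof (Rabs_pos y0); pose proof (Rabs_pos (y - y0));
  pose proof (Rabs_pos (x - x0)); pose proof (Rabs_pos x).
  assert (Rabs x * Rabs (y - y0) <= (Rabs x0 + 1) * d) by (apply Rmult_le_compat; lra).
  assert (Rabs y0 * Rabs (x - x0) <= Rabs y0 * d) by (apply Rmult_le_compat_l; lra).
  nra.
Qed.

Lemma Rcont2_mult f g : Rcont2 f -> Rcont2 g -> Rcont2 (fun s t => f s t * g s t).
Proof.
  intros hf hg s t e he.
  set (K := Rabs (f s t) + Rabs (g s t) + 1).
  assert (hK : 1 <= K) by (unfold K; pose proof (Rabs_pos (f s t));
                           pose proof (Rabs_pos (g s t)); lra).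
  set (e' := Rmin 1 (e / (2 * K))).
  assert (he' : 0 < e') by (apply Rmin_pos; [lra|apply Rdiv_lt_0_compat; lra]).
  destruct (hf s t e' he') as [d1 [hd1 H1]].
  destruct (hg s t e' he') as [d2 [hd2 H2]].
  exists (Rmin d1 d2); split; [apply Rmin_pos; auto|]; intros s' t' hs ht.
  pose proof (Rmin_l d1 d2); pose proof (Rmin_r d1 d2).
  assert (A1 : Rabs (f s' t' - f s t) < e') by (apply H1; lra).
  assert (A2 : Rabs (g s' t' - g s t) < e') by (apply H2; lra).
  assert (He1 : e' <= 1) by apply Rmin_l.
  assert (E2 : e' <= e / (2 * K)) by apply Rmin_r.
  pose proof (Rabs_mult_sub_le _ _ _ _ _ he' He1 A1 A2) as PB. fold K in PB.
  assert (K * e' <= K * (e / (2*K))) by (apply Rmult_le_compat_l; lra).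
  assert (K * (e / (2 * K)) = e / 2) by (field; lra).
  lra.
Qed.

Lemma Rcont2_abs f : Rcont2 f -> Rcont2 (fun s t => Rabs (f s t)).
Proof.
  intros hf s t e he. destruct (hf s t e he) as [d [hd H]].
  exists d; split; auto; intros.
  eapply Rle_lt_trans; [apply Rabs_triang_inv2|]; auto.
Qed.

Lemma Rcont2_min f g : Rcont2 f -> Rcont2 g -> Rcont2 (fun s t => Rmin (f s t) (g s t)).
Proof.
  intros hf hg.
  apply Rcont2_ext with (fun s t => (f s t + g s t - Rabs (f s t - g s t)) * / 2).
  - intros; unfold Rmin, Rabs; repeat destruct Rle_dec; repeat destruct Rcase_abs; lra.
  - apply Rcont2_mult, Rcont2_const. apply Rcont2_minus, Rcont2_abs, Rcont2_minus;
      auto using Rcont2_plus.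
Qed.

Lemma Rcont2_max f g : Rcont2 f -> Rcont2 g -> Rcont2 (fun s t => Rmax (f s t) (g s t)).
Proof.
  intros hf hg.
  apply Rcont2_ext with (fun s t => (f s t + g s t + Rabs (f s t - g s t)) * / 2).
  - intros; unfold Rmax, Rabs; repeat destruct Rle_dec; repeat destruct Rcase_abs; lra.
  - apply Rcont2_mult, Rcont2_const. apply Rcont2_plus, Rcont2_abs, Rcont2_minus;
      auto using Rcont2_plus.
Qed.

Ltac Rcont2_tac := repeat first [ apply Rcont2_plus | apply Rcont2_minus | apply Rcont2_mult
  | apply Rcont2_opp | apply Rcont2_abs | apply Rcont2_min | apply Rcont2_max
  | apply Rcont2_fst | apply Rcont2_snd | apply Rcont2_const ].

Lemma TI_is_topology : is_topology TI.
Proof.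
  split; [|split].
  - exists (fun _ => True); split; [|tauto]. intros x _; exists 1; split; [lra|auto].
  - intros U V [W1 [o1 e1]] [W2 [o2 e2]]. exists (fun r => W1 r /\ W2 r); split.
    + intros x [h1 h2]. destruct (o1 x h1) as [d1 [hd1 H1]]. destruct (o2 x h2) as [d2 [hd2 H2]].
      exists (Rmin d1 d2); split; [apply Rmin_pos; auto|]. intros y hy.
      pose proof (Rmin_l d1 d2); pose proof (Rmin_r d1 d2). split; [apply H1|apply H2]; lra.
    + intro t; rewrite e1, e2; tauto.
  - intros F hF.
    exists (fun r => exists U W, F U /\ Ropen W /\ (forall t : I, U t <-> W (tval t)) /\ W r).
    split.
    + intros x [U [W [hU [oW [eW hx]]]]]. destruct (oW x hx) as [d [hd H]].
      exists d; split; auto. intros y hy. exists U, W; auto.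
    + intro t; split.
      * intros [U [hU ht]]. destruct (hF U hU) as [W [oW eW]]. exists U, W.
        split; [auto|split; [auto|split; [auto|apply eW; auto]]].
      * intros [U [W [hU [_ [eW hx]]]]]. exists U; split; auto. apply eW; auto.
Qed.

Lemma TI_of_balls (V : I -> Prop) :
  (forall t, V t -> exists e, 0 < e /\ forall t', Rabs (tval t' - tval t) < e -> V t') ->
  TI V.
Proof.
  intros h.
  exists (fun r => exists t e, V t /\ 0 < e /\
            (forall t', Rabs (tval t' - tval t) < e -> V t') /\ Rabs (r - tval t) < e).
  split.
  - intros r [t [e [hV [he [H hr]]]]]. exists (e - Rabs (r - tval t)); split; [lra|].
    intros y hy. exists t, e; repeat split; auto.
    replace (y - tval t) with ((y - r) + (r - tval t)) by ring.
    eapply Rle_lt_trans; [apply Rabs_triang|]. lra.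
  - intro t; split.
    + intros hV. destruct (h t hV) as [e [he H]]. exists t, e; repeat split; auto.
      replace (tval t - tval t) with 0 by ring; rewrite Rabs_R0; auto.
    + intros [t0 [e [_ [_ [H hr]]]]]. apply H; auto.
Qed.

Lemma TI_ball (V : I -> Prop) : TI V -> forall t, V t ->
  exists e, 0 < e /\ forall t', Rabs (tval t' - tval t) < e -> V t'.
Proof.
  intros [W [oW eW]] t ht. apply eW in ht. destruct (oW _ ht) as [e [he H]].
  exists e; split; auto. intros t' h'. apply eW, H, h'.
Qed.

Definition dist2_lt (p q : I * I) (e : R) : Prop :=
  Rabs (tval (fst q) - tval (fst p)) < e /\ Rabs (tval (snd q) - tval (snd p)) < e.

Lemma dist2_lt_fst p q e : dist2_lt p q e -> Rabs (tval (fst q) - tval (fst p)) < e.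
Proof. intros []; auto. Qed.

Lemma dist2_lt_snd p q e : dist2_lt p q e -> Rabs (tval (snd q) - tval (snd p)) < e.
Proof. intros []; auto. Qed.

Lemma prodTI_of_balls (P : I * I -> Prop) :
  (forall p, P p -> exists e, 0 < e /\ forall q, dist2_lt p q e -> P q) -> prodtop TI TI P.
Proof.
  intros h. apply open_of_local; [apply prodtop_is_topology|].
  intros p hp. destruct (h p hp) as [e [he H]].
  assert (hball : forall c, TI (fun s : I => Rabs (tval s - c) < e)).
  { intro c. apply TI_of_balls. intros t ht. exists (e - Rabs (tval t - c)); split; [lra|].
    intros t' h'. replace (tval t' - c) with ((tval t' - tval t) + (tval t - c)) by ring.
    eapply Rle_lt_trans; [apply Rabs_triang|]. lra. }
  exists (fun q => (fun s : I => Rabs (tval s - tval (fst p)) < e) (fst q) /\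
                  (fun s : I => Rabs (tval s - tval (snd p)) < e) (snd q)).
  split; [|split].
  - exact (prodtop_rect_open TI TI _ _ (hball (tval (fst p))) (hball (tval (snd p)))).
  - simpl; rewrite !Rminus_diag, Rabs_R0; auto.
  - intros q [h1 h2]; apply H; split; auto.
Qed.

Lemma prodTI_ball (P : I * I -> Prop) : prodtop TI TI P -> forall p, P p ->
  exists e, 0 < e /\ forall q, dist2_lt p q e -> P q.
Proof.
  intros hP [s t] hp.
  destruct (prodtop_rect TI TI P TI_is_topology TI_is_topology hP s t hp)
    as [U [V [hU [hV [hs [ht H]]]]]].
  destruct (TI_ball U hU s hs) as [e1 [he1 H1]].
  destruct (TI_ball V hV t ht) as [e2 [he2 H2]].
  exists (Rmin e1 e2); split; [apply Rmin_pos; auto|].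
  intros [s' t'] [d1 d2]; simpl in *.
  pose proof (Rmin_l e1 e2); pose proof (Rmin_r e1 e2).
  apply H; [apply H1|apply H2]; lra.
Qed.

Section MetricContinuity.
Context {X : Type} (TX : (X -> Prop) -> Prop).

Definition cont_I (a : I -> X) : Prop :=
  forall V, TX V -> forall s, V (a s) -> exists e, 0 < e /\
    forall s', Rabs (tval s' - tval s) < e -> V (a s').

Definition cont_II (H : I * I -> X) : Prop :=
  forall V, TX V -> forall p, V (H p) -> exists e, 0 < e /\
    forall q, dist2_lt p q e -> V (H q).

Lemma continuous_I_iff (a : I -> X) : continuous TI TX a <-> cont_I a.
Proof.
  split.
  - intros h V hV s hs. apply (TI_ball _ (h V hV)); auto.
  - intros h V hV. apply TI_of_balls. intros; apply h; auto.
Qed.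

Lemma continuous_II_iff (H : I * I -> X) : continuous (prodtop TI TI) TX H <-> cont_II H.
Proof.
  split.
  - intros h V hV p hp. apply (prodTI_ball _ (h V hV)); auto.
  - intros h V hV. apply prodTI_of_balls. intros; apply h; auto.
Qed.

Lemma cont_II_ext (H H' : I * I -> X) : (forall p, H p = H' p) -> cont_II H -> cont_II H'.
Proof.
  intros e h V hV p hp. rewrite <- e in hp. destruct (h V hV p hp) as [d [hd D]].
  exists d; split; auto; intros; rewrite <- e; auto.
Qed.

Lemma cont_II_reparam (H : I * I -> X) f1 f2 : cont_II H -> Rcont2 f1 -> Rcont2 f2 ->
  cont_II (fun p => H (clampI (f1 (tval (fst p)) (tval (snd p))),
                       clampI (f2 (tval (fst p)) (tval (snd p))))).
Proof.
  intros hH h1 h2 V hV p hp.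
  destruct (hH V hV _ hp) as [e [he He]].
  destruct (h1 (tval (fst p)) (tval (snd p)) e he) as [d1 [hd1 D1]].
  destruct (h2 (tval (fst p)) (tval (snd p)) e he) as [d2 [hd2 D2]].
  exists (Rmin d1 d2); split; [apply Rmin_pos; auto|].
  intros q [q1 q2]. pose proof (Rmin_l d1 d2); pose proof (Rmin_r d1 d2).
  apply He; split; simpl; (eapply Rle_lt_trans; [apply clampI_lipschitz|]);
    [apply D1|apply D2]; lra.
Qed.

Lemma cont_II_fst (a : I -> X) : cont_I a -> cont_II (fun p => a (fst p)).
Proof.
  intros h V hV p hp. destruct (h V hV _ hp) as [e [he He]].
  exists e; split; auto. intros q [q1 _]; auto.
Qed.

Lemma cont_I_slice (H : I * I -> X) c : cont_II H -> cont_I (fun s => H (s, c)).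
Proof.
  intros h V hV s hs. destruct (h V hV _ hs) as [e [he He]].
  exists e; split; auto. intros s' h'. apply He; split; simpl; auto.
  rewrite Rminus_diag, Rabs_R0; auto.
Qed.

Lemma cont_II_paste (c : I * I -> R) (K1 K2 : I * I -> X) :
  (forall p q e, dist2_lt p q e -> Rabs (c q - c p) < e) ->
  cont_II K1 -> cont_II K2 -> (forall p, c p = 1/2 -> K1 p = K2 p) ->
  cont_II (fun p => if Rle_dec (c p) (1/2) then K1 p else K2 p).
Proof.
  intros hc h1 h2 hb V hV p hp.
  assert (near : forall e q, dist2_lt p q (Rmin e (Rabs (c p - 1/2))) ->
            dist2_lt p q e /\ Rabs (c q - c p) < Rabs (c p - 1/2)).
  { intros e q hq. pose proof (Rmin_l e (Rabs (c p - 1/2)));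
      pose proof (Rmin_r e (Rabs (c p - 1/2))).
    destruct hq as [q1 q2]. pose proof (hc p q _ (conj q1 q2)).
    split; [split|]; lra. }
  destruct (Rtotal_order (c p) (1/2)) as [lt | [eq | gt]].
  - destruct (Rle_dec (c p) (1/2)); [|lra].
    destruct (h1 V hV p hp) as [e [he He]].
    exists (Rmin e (Rabs (c p - 1/2))); split; [apply Rmin_pos; [|apply Rabs_pos_lt]; lra|].
    intros q hq. destruct (near e q hq) as [hq' hcq].
    destruct (Rle_dec (c q) (1/2)); [apply He; auto|].
    unfold Rabs in hcq; repeat destruct Rcase_abs in hcq; lra.
  - assert (V (K1 p) /\ V (K2 p)) as [v1 v2].
    { destruct (Rle_dec (c p) (1/2)); [|lra]. rewrite <- hb; auto. }
    destruct (h1 V hV p v1) as [e1 [he1 He1]].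
    destruct (h2 V hV p v2) as [e2 [he2 He2]].
    exists (Rmin e1 e2); split; [apply Rmin_pos; lra|].
    intros q [q1 q2]. pose proof (Rmin_l e1 e2); pose proof (Rmin_r e1 e2).
    destruct (Rle_dec (c q) (1/2)); [apply He1|apply He2]; split; lra.
  - destruct (Rle_dec (c p) (1/2)); [lra|].
    destruct (h2 V hV p hp) as [e [he He]].
    exists (Rmin e (Rabs (c p - 1/2))); split; [apply Rmin_pos; [|apply Rabs_pos_lt]; lra|].
    intros q hq. destruct (near e q hq) as [hq' hcq].
    destruct (Rle_dec (c q) (1/2)); [|apply He; auto].
    unfold Rabs in hcq; repeat destruct Rcase_abs in hcq; lra.
Qed.

End MetricContinuity.

(** * Loops and homotopies *)

Section Homotopy.
Variables (X : Type) (TX : (X -> Prop) -> Prop) (x0 : X).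

Local Notation homotopic := (homotopic TX x0).
Local Notation is_loop := (is_loop TX x0).

Lemma cont_II_concat (H1 H2 : I * I -> X) :
  cont_II TX H1 -> cont_II TX H2 -> (forall t, H1 (I1, t) = H2 (I0, t)) ->
  cont_II TX (fun p => if Rle_dec (tval (fst p)) (1/2)
                       then H1 (clampI (2 * tval (fst p)), snd p)
                       else H2 (clampI (2 * tval (fst p) - 1), snd p)).
Proof.
  intros h1 h2 hb. apply (cont_II_paste TX (fun p => tval (fst p))); [apply dist2_lt_fst| | |].
  - eapply cont_II_ext;
      [|apply (cont_II_reparam TX H1 (fun s t => 2 * s) (fun s t => t)); auto; Rcont2_tac].
    intros p; cbv beta; rewrite clampI_tval; auto.
  - eapply cont_II_ext;
      [|apply (cont_II_reparam TX H2 (fun s t => 2 * s - 1) (fun s t => t)); auto; Rcont2_tac].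
    intros p; cbv beta; rewrite clampI_tval; auto.
  - intros [s0 t0] hp; simpl in hp |- *; rewrite hp.
    replace (clampI (2 * (1/2))) with I1 by clampI_eq.
    replace (clampI (2 * (1/2) - 1)) with I0 by clampI_eq. auto.
Qed.

Lemma concat_is_loop a b : is_loop a -> is_loop b -> is_loop (concat a b).
Proof.
  intros [ca [a0 a1]] [cb [b0 b1]]. split; [|split].
  - apply continuous_I_iff.
    apply (cont_I_slice TX _ I0 (cont_II_concat (fun p => a (fst p)) (fun p => b (fst p))
       (cont_II_fst _ _ (proj1 (continuous_I_iff _ _) ca))
       (cont_II_fst _ _ (proj1 (continuous_I_iff _ _) cb))
       ltac:(intros; simpl; congruence))).
  - unfold concat. rewrite I0_val. destruct Rle_dec; [|lra].
    replace (clampI (2 * 0)) with I0 by clampI_eq. auto.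
  - unfold concat. rewrite I1_val. destruct Rle_dec; [lra|].
    replace (clampI (2 * 1 - 1)) with I1 by clampI_eq. auto.
Qed.

Lemma reverse_is_loop a : is_loop a -> is_loop (reverse a).
Proof.
  intros [ca [a0 a1]]. split; [|split].
  - apply continuous_I_iff. unfold reverse.
    apply (cont_I_slice TX _ I0 (cont_II_reparam TX (fun p => a (fst p))
      (fun s t => 1 - s) (fun s t => t)
      (cont_II_fst _ _ (proj1 (continuous_I_iff _ _) ca)) ltac:(Rcont2_tac) ltac:(Rcont2_tac))).
  - unfold reverse. rewrite I0_val. replace (clampI (1 - 0)) with I1 by clampI_eq. auto.
  - unfold reverse. rewrite I1_val. replace (clampI (1 - 1)) with I0 by clampI_eq. auto.
Qed.

Lemma homotopic_refl a : is_loop a -> homotopic a a.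
Proof.
  intros [ca [a0 a1]]. exists (fun p => a (fst p)). split; [|split]; auto.
  apply continuous_II_iff, cont_II_fst, continuous_I_iff, ca.
Qed.

Lemma homotopic_sym a b : homotopic a b -> homotopic b a.
Proof.
  intros [H [cH [e1 e2]]].
  exists (fun p => H (fst p, clampI (1 - tval (snd p)))). split; [|split]; auto.
  - apply continuous_II_iff.
    eapply cont_II_ext; [|apply (cont_II_reparam TX H (fun s t => s) (fun s t => 1 - t));
      [apply continuous_II_iff; auto|Rcont2_tac|Rcont2_tac]].
    intros p; cbv beta; rewrite clampI_tval; auto.
  - intros s; cbn [fst snd]. rewrite I0_val, I1_val.
    replace (clampI (1 - 0)) with I1 by clampI_eq.
    replace (clampI (1 - 1)) with I0 by clampI_eq.
    destruct (e1 s); auto.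
Qed.

Lemma homotopic_trans a b c : homotopic a b -> homotopic b c -> homotopic a c.
Proof.
  intros [H1 [c1 [e1 f1]]] [H2 [c2 [e2 f2]]].
  exists (fun p => if Rle_dec (tval (snd p)) (1/2) then H1 (fst p, clampI (2 * tval (snd p)))
                   else H2 (fst p, clampI (2 * tval (snd p) - 1))). split; [|split].
  - apply continuous_II_iff, (cont_II_paste TX (fun p => tval (snd p)));
      [apply dist2_lt_snd| | |].
    + eapply cont_II_ext; [|apply (cont_II_reparam TX H1 (fun s t => s) (fun s t => 2 * t));
        [apply continuous_II_iff; auto|Rcont2_tac|Rcont2_tac]].
      intros p; cbv beta; rewrite clampI_tval; auto.
    + eapply cont_II_ext; [|apply (cont_II_reparam TX H2 (fun s t => s) (fun s t => 2 * t - 1));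
        [apply continuous_II_iff; auto|Rcont2_tac|Rcont2_tac]].
      intros p; cbv beta; rewrite clampI_tval; auto.
    + intros [s0 t0] hp; simpl in hp |- *; rewrite hp.
      replace (clampI (2 * (1/2))) with I1 by clampI_eq.
      replace (clampI (2 * (1/2) - 1)) with I0 by clampI_eq.
      destruct (e1 s0), (e2 s0); congruence.
  - intros s; cbn [fst snd]. rewrite I0_val, I1_val. split.
    + destruct Rle_dec; [|lra]. replace (clampI (2 * 0)) with I0 by clampI_eq. apply e1.
    + destruct Rle_dec; [lra|]. replace (clampI (2 * 1 - 1)) with I1 by clampI_eq. apply e2.
  - intros t; cbn [fst snd]. destruct Rle_dec; [apply f1|apply f2].
Qed.

Lemma homotopic_concat a a' b b' :
  homotopic a a' -> homotopic b b' -> homotopic (concat a b) (concat a' b').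
Proof.
  intros [H1 [c1 [e1 f1]]] [H2 [c2 [e2 f2]]].
  exists (fun p => if Rle_dec (tval (fst p)) (1/2) then H1 (clampI (2 * tval (fst p)), snd p)
                   else H2 (clampI (2 * tval (fst p) - 1), snd p)). split; [|split].
  - apply continuous_II_iff, cont_II_concat; try (apply continuous_II_iff; auto).
    intros t; destruct (f1 t), (f2 t); congruence.
  - intros s; unfold concat; cbn [fst snd]. destruct Rle_dec; [apply e1|apply e2].
  - intros t; cbn [fst snd]. rewrite I0_val, I1_val. split.
    + destruct Rle_dec; [|lra]. replace (clampI (2 * 0)) with I0 by clampI_eq. apply f1.
    + destruct Rle_dec; [lra|]. replace (clampI (2 * 1 - 1)) with I1 by clampI_eq. apply f2.
Qed.

Lemma homotopic_reparam (L A B : I -> X) (f : R -> R -> R) :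
  cont_I TX L -> Rcont2 f ->
  (forall s, A s = L (clampI (f (tval s) 0))) ->
  (forall s, B s = L (clampI (f (tval s) 1))) ->
  (forall t, 0 <= t <= 1 -> L (clampI (f 0 t)) = x0 /\ L (clampI (f 1 t)) = x0) ->
  homotopic A B.
Proof.
  intros cL mf hA hB hE.
  exists (fun p => L (clampI (f (tval (fst p)) (tval (snd p))))). split; [|split].
  - apply continuous_II_iff.
    eapply cont_II_ext; [|apply (cont_II_reparam TX (fun p => L (fst p)) f (fun s t => t));
      [apply cont_II_fst; auto|auto|Rcont2_tac]].
    intros p; cbv beta; auto.
  - intros s; cbn [fst snd]. rewrite I0_val, I1_val; auto.
  - intros t; cbn [fst snd]. rewrite I0_val, I1_val. apply hE, (proj2_sig t).
Qed.

Ltac simpl_clampI := repeat match goal with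
  |- context [tval (clampI ?r)] => rewrite (clampI_val r) by lra end.

(* [(a . b) . c] runs through [a], [b], [c] on [[0,1/4]], [[1/4,1/2]], [[1/2,1]];
   the piecewise linear [phi] maps these onto the thirds [[0,1/2]], [[1/2,3/4]],
   [[3/4,1]] used by [a . (b . c)]. *)
Lemma homotopic_concat_assoc a b c : is_loop a -> is_loop b -> is_loop c ->
  homotopic (concat (concat a b) c) (concat a (concat b c)).
Proof.
  intros la lb lc.
  set (phi := fun s => Rmin (2 * s) (Rmin (s + /4) (/2 * s + /2))).
  assert (lL : is_loop (concat a (concat b c))) by auto using concat_is_loop.
  destruct lL as [cL [L0 L1]].
  apply (homotopic_reparam (concat a (concat b c)) _ _ (fun s t => (1 - t) * phi s + t * s)).
  - apply continuous_I_iff; auto.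
  - unfold phi; Rcont2_tac.
  - intros [u hu]. cbn [proj1_sig].
    replace ((1 - 0) * phi u + 0 * u) with (phi u) by ring.
    assert (hc : (u <= /4 /\ phi u = 2 * u) \/ (/4 <= u <= /2 /\ phi u = u + /4)
               \/ (/2 <= u /\ phi u = /2 * u + /2)).
    { unfold phi, Rmin; repeat destruct Rle_dec; lra. }
    unfold concat. cbn [proj1_sig].
    destruct hc as [[h1 h2] | [[h1 h2] | [h1 h2]]]; rewrite h2; simpl_clampI;
      repeat (destruct Rle_dec; try lra; simpl_clampI);
      f_equal; apply I_eq; simpl_clampI; lra.
  - intros s. replace ((1 - 1) * phi (tval s) + 1 * tval s) with (tval s) by ring.
    rewrite clampI_tval; auto.
  - intros t ht. unfold phi.
    replace ((1 - t) * Rmin (2 * 0) (Rmin (0 + / 4) (/ 2 * 0 + / 2)) + t * 0) with 0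
      by (unfold Rmin; repeat destruct Rle_dec; lra).
    replace ((1 - t) * Rmin (2 * 1) (Rmin (1 + / 4) (/ 2 * 1 + / 2)) + t * 1) with 1
      by (unfold Rmin; repeat destruct Rle_dec; lra).
    auto.
Qed.

Lemma homotopic_concat_const_l a : is_loop a -> homotopic (concat (fun _ => x0) a) a.
Proof.
  intros [ca [a0 a1]].
  apply (homotopic_reparam a _ _ (fun s t => (1 - t) * Rmax 0 (2 * s - 1) + t * s)).
  - apply continuous_I_iff; auto.
  - Rcont2_tac.
  - intros [u hu]. unfold concat. cbn [proj1_sig].
    destruct (Rle_dec u (/2)).
    + replace ((1 - 0) * Rmax 0 (2 * u - 1) + 0 * u) with 0
        by (unfold Rmax; destruct Rle_dec; lra).
      destruct Rle_dec; [|lra]. rewrite <- a0. f_equal.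
    + replace ((1 - 0) * Rmax 0 (2 * u - 1) + 0 * u) with (2 * u - 1)
        by (unfold Rmax; destruct Rle_dec; lra).
      destruct Rle_dec; [lra|]. auto.
  - intros s. replace ((1 - 1) * Rmax 0 (2 * tval s - 1) + 1 * tval s) with (tval s) by ring.
    rewrite clampI_tval; auto.
  - intros t ht.
    replace ((1 - t) * Rmax 0 (2 * 0 - 1) + t * 0) with 0
      by (unfold Rmax; destruct Rle_dec; lra).
    replace ((1 - t) * Rmax 0 (2 * 1 - 1) + t * 1) with 1
      by (unfold Rmax; destruct Rle_dec; lra).
    auto.
Qed.

Lemma homotopic_concat_reverse_l a : is_loop a -> homotopic (concat (reverse a) a) (fun _ => x0).
Proof.
  intros [ca [a0 a1]].
  apply (homotopic_reparam a _ _ (fun s t => t + (1 - t) * Rabs (2 * s - 1))).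
  - apply continuous_I_iff; auto.
  - Rcont2_tac.
  - intros [u hu]. unfold concat, reverse. cbn [proj1_sig].
    destruct (Rle_dec u (/2)).
    + replace (0 + (1 - 0) * Rabs (2 * u - 1)) with (1 - 2 * u)
        by (unfold Rabs; destruct Rcase_abs; lra).
      destruct Rle_dec; [|lra]. simpl_clampI. auto.
    + replace (0 + (1 - 0) * Rabs (2 * u - 1)) with (2 * u - 1)
        by (unfold Rabs; destruct Rcase_abs; lra).
      destruct Rle_dec; [lra|]. auto.
  - intros s. replace (1 + (1 - 1) * Rabs (2 * tval s - 1)) with 1 by ring. auto.
  - intros t ht.
    replace (t + (1 - t) * Rabs (2 * 0 - 1)) with 1 by (unfold Rabs; destruct Rcase_abs; lra).
    replace (t + (1 - t) * Rabs (2 * 1 - 1)) with 1 by (unfold Rabs; destruct Rcase_abs; lra).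
    auto.
Qed.

End Homotopy.

(** * The fundamental group *)

Section FundamentalGroup.
Variables (X : Type) (TX : (X -> Prop) -> Prop) (x0 : X).

Local Notation htp := (htp TX x0).

Lemma htp_refl a : htp a a.
Proof. apply homotopic_refl, (proj2_sig a). Qed.

Lemma htp_sym a b : htp a b -> htp b a.
Proof. apply homotopic_sym. Qed.

Lemma htp_trans a b c : htp a b -> htp b c -> htp a c.
Proof. apply homotopic_trans. Qed.

Definition loop_concat (a b : Omega TX x0) : Omega TX x0 :=
  exist _ (concat (proj1_sig a) (proj1_sig b))
    (concat_is_loop X TX x0 _ _ (proj2_sig a) (proj2_sig b)).

Definition loop_reverse (a : Omega TX x0) : Omega TX x0 :=
  exist _ (reverse (proj1_sig a)) (reverse_is_loop X TX x0 _ (proj2_sig a)).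

Lemma htp_loop_concat a a' b b' :
  htp a a' -> htp b b' -> htp (loop_concat a b) (loop_concat a' b').
Proof. apply homotopic_concat. Qed.

Lemma htp_rep_pi_map a : htp (rep (pi_map TX x0 a)) a.
Proof. apply htp_sym, (rep_cls _ htp htp_refl). Qed.

(* [pi1_mul] and [pi1_inv] pick, by [epsilon], some class of the right
   homotopy type; the class of the concatenation shows one exists. *)
Lemma htp_rep_pi1_mul c d :
  htp (rep (pi1_mul TX x0 c d)) (loop_concat (rep c) (rep d)).
Proof.
  apply htp_sym. unfold pi1_mul, pi1_inv. apply epsilon_spec.
  exists (pi_map TX x0 (loop_concat (rep c) (rep d))).
  exact (htp_sym _ _ (htp_rep_pi_map (loop_concat (rep c) (rep d)))).
Qed.

Lemma htp_rep_pi1_inv c : htp (rep (pi1_inv TX x0 c)) (loop_reverse (rep c)).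
Proof.
  apply htp_sym. unfold pi1_mul, pi1_inv. apply epsilon_spec.
  exists (pi_map TX x0 (loop_reverse (rep c))).
  exact (htp_sym _ _ (htp_rep_pi_map (loop_reverse (rep c)))).
Qed.

Lemma pi1_eq (c d : pi1 TX x0) : htp (rep c) (rep d) -> c = d.
Proof. apply quot_eq; [apply htp_sym|apply htp_trans]. Qed.

Lemma pi1_is_group (HX : is_topology TX) :
  is_group (pi1_mul TX x0) (pi1_inv TX x0) (pi1_one TX x0 HX).
Proof.
  split; [|split].
  - intros c d e. apply pi1_eq.
    eapply htp_trans; [apply htp_rep_pi1_mul|].
    eapply htp_trans; [apply htp_loop_concat; [apply htp_rep_pi1_mul|apply htp_refl]|].
    apply htp_sym.
    eapply htp_trans; [apply htp_rep_pi1_mul|].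
    eapply htp_trans; [apply htp_loop_concat; [apply htp_refl|apply htp_rep_pi1_mul]|].
    apply htp_sym, homotopic_concat_assoc; apply (proj2_sig (rep _)).
  - intros c. apply pi1_eq.
    eapply htp_trans; [apply htp_rep_pi1_mul|].
    eapply htp_trans; [apply htp_loop_concat; [apply htp_rep_pi_map|apply htp_refl]|].
    apply homotopic_concat_const_l, (proj2_sig (rep _)).
  - intros c. apply pi1_eq.
    eapply htp_trans; [apply htp_rep_pi1_mul|].
    eapply htp_trans; [apply htp_loop_concat; [apply htp_rep_pi1_inv|apply htp_refl]|].
    eapply htp_trans; [|apply htp_sym, htp_rep_pi_map].
    apply homotopic_concat_reverse_l, (proj2_sig (rep _)).
Qed.

End FundamentalGroup.

Theorem theorem3p12 (X : Type) (TX : (X -> Prop) -> Prop) (HX : is_topology TX)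
  (x0 : X) :
  is_group_topology (pi1_mul TX x0) (pi1_inv TX x0) (pi1_tau_top TX HX x0) /\
  continuous (CO TX x0) (pi1_tau_top TX HX x0) (pi_map TX x0) /\
  (forall T : (pi1 TX x0 -> Prop) -> Prop,
     is_group_topology (pi1_mul TX x0) (pi1_inv TX x0) T ->
     continuous (CO TX x0) T (pi_map TX x0) ->
     forall U, T U -> pi1_tau_top TX HX x0 U) /\
  (forall (G : Type) (gmul : G -> G -> G) (ginv : G -> G) (gone : G)
          (TG : (G -> Prop) -> Prop),
     is_group gmul ginv gone -> is_group_topology gmul ginv TG ->
     forall Phi : pi1 TX x0 -> G,
       (forall a b, Phi (pi1_mul TX x0 a b) = gmul (Phi a) (Phi b)) ->
       continuous (CO TX x0) TG (fun a => Phi (pi_map TX x0 a)) ->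
       continuous (pi1_tau_top TX HX x0) TG Phi).
Proof.
  pose proof (pi1_is_group X TX x0 HX) as hpi1.
  assert (hQ : is_topology (qtop TX x0))
    by exact (final_top_is_topology _ (pi_map TX x0) (generated_is_topology _)).
  (* Continuity out of [qtop] is continuity of the composite with [pi_map]. *)
  assert (universal : forall (G : Type) gmul ginv (gone : G) TG,
     is_group gmul ginv gone -> is_group_topology gmul ginv TG ->
     forall Phi : pi1 TX x0 -> G,
       (forall a b, Phi (pi1_mul TX x0 a b) = gmul (Phi a) (Phi b)) ->
       continuous (CO TX x0) TG (fun a => Phi (pi_map TX x0 a)) ->
       continuous (pi1_tau_top TX HX x0) TG Phi)
    by (intros; eapply continuous_from_tau; eauto).
  split; [|split; [|split]].
  - apply tau_group_topology; auto.
  - apply (continuous_comp _ (qtop TX x0) _ (pi_map TX x0) (fun c => c)).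
    + intros U hU; exact hU.
    + apply continuous_to_tau; auto.
  - intros T hT hpi U.
    apply (universal _ _ _ _ T hpi1 hT (fun c => c)); auto.
  - exact universal.
Qed.
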